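(* Let $n\ge2$. For every $l\in\mathbb{Z}$, $$X^{(n)}_l=\frac{1}{d_n}\sum_{\kappa\in I'_n}p_n\!\left(\mathbf{e}\!\left[\omega^{(n)}_{\kappa,1}\right]\right)\mathbf{e}\!\left[\omega^{(n)}_{\kappa,1}\cdot l\right]+\frac{1}{a_n}X^{(n-2)}_l.$$
   Context: Fix integers $a_1,a_2,\ldots\ge2$, $d_0=1$, $d_i=a_1\cdots a_i$, $\mathbf{e}[\alpha]=\exp(2\pi\sqrt{-1}\alpha)$. $I'_n=\{\kappa\in\{1,\dots,d_n\}\mid a_n\nmid\kappa\}$; $\omega^{(n)}_{\kappa,1}=\frac{\kappa}{d_n}-\lfloor\frac{\kappa}{d_n}\rfloor$. $p_n(t)=\prod_{i=1}^n(1-t^{d_{i-1}})^{(-1)^{n-i}}$ for $n\ge1$ (a polynomial), $p_0(t)=1$. For $n\ge1$ and $l\in\mathbb{Z}$, $X^{(n)}_l:=\frac{1}{d_n}\sum_{a=1}^{d_n}p_n(\mathbf{e}[\frac{a}{d_n}])\mathbf{e}[\frac{a}{d_n}l]$, and $X^{(0)}_l:=1$. *)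

From HB Require Import structures.
From mathcomp Require Import all_boot all_order all_algebra.
From mathcomp Require Import reals trigo.
From mathcomp Require Import complex.
Set Implicit Arguments. Unset Strict Implicit. Unset Printing Implicit Defensive.
Import Order.TTheory GRing.Theory Num.Theory.
Local Open Scope ring_scope.

Definition dd (a : nat -> nat) (i : nat) : nat := (\prod_(1 <= j < i.+1) a j)%N.

(* e[alpha] = exp(2 pi sqrt(-1) alpha) = cos(2 pi alpha) + i sin(2 pi alpha) *)
Definition ee (R : realType) (x : R) : R[i] :=
  Complex (cos (2 * pi * x)) (sin (2 * pi * x)).

(* p_n(t) = prod_{i=1}^n (1 - t^{d_{i-1}})^{(-1)^{n-i}}, as a polynomial:
   (product of factors with n-i even) divided (exactly) by
   (product of factors with n-i odd); p_0 = 1. *)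
Definition pnum (R : realType) (a : nat -> nat) (n : nat) : {poly R[i]} :=
  \prod_(1 <= i < n.+1 | ~~ odd (n - i)) (1 - 'X^(dd a i.-1)).
Definition pden (R : realType) (a : nat -> nat) (n : nat) : {poly R[i]} :=
  \prod_(1 <= i < n.+1 | odd (n - i)) (1 - 'X^(dd a i.-1)).
Definition pp (R : realType) (a : nat -> nat) (n : nat) : {poly R[i]} :=
  if n is 0 then 1 else pnum R a n %/ pden R a n.

Definition omega (R : realType) (a : nat -> nat) (n k : nat) : R :=
  k%:R / (dd a n)%:R - (Num.floor (k%:R / (dd a n)%:R : R))%:~R.

Definition XX (R : realType) (a : nat -> nat) (n : nat) (l : int) : R[i] :=
  if n is 0 then 1 else
  ((dd a n)%:R)^-1 * \sum_(1 <= b < (dd a n).+1)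
     (pp R a n).[ee (b%:R / (dd a n)%:R : R)] *
       ee ((b%:R / (dd a n)%:R) * l%:~R : R).

(* The terms of the sum defining X^(n)_l split according to whether a_n
divides the summation index b.  For b = c a_n the point e[b/d_n] equals
e[c/d_(n-1)], and p_n = q_(n-2) p_(n-2) with
q_k = (1 - t^(d_(k+1))) / (1 - t^(d_k)) = sum_(j < a_(k+1)) t^(j d_k).
At t = e[c/d_(n-1)], q_(n-2)(t) is a sum of powers of the a_(n-1)-th root
of unity e[c/a_(n-1)], hence equals a_(n-1) if a_(n-1) divides c and 0
otherwise.  The surviving terms c = m a_(n-1) are exactly the terms of the
sum defining X^(n-2)_l, which comes out with the factor
a_(n-1) d_(n-2) / d_n = 1 / a_n. *)
From HB Require Import structures.
From mathcomp Require Import all_boot all_order all_algebra.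
From mathcomp Require Import reals trigo.
From mathcomp Require Import complex.
From mathcomp Require Import ring lra.
Import Order.TTheory GRing.Theory Num.Theory.
Local Open Scope ring_scope.

Lemma subr1X (V : comPzRingType) (x : V) n :
  1 - x ^+ n = (1 - x) * \sum_(i < n) x ^+ i.
Proof. by rewrite -opprB subrX1 -mulNr opprB. Qed.

Lemma sum_expr_unity_root_eq0 (V : idomainType) (x : V) n :
  x ^+ n = 1 -> x != 1 -> \sum_(i < n) x ^+ i = 0.
Proof.
move=> xn1 x_neq1; apply/eqP; have /esym/eqP := subrX1 x n.
by rewrite xn1 subrr mulf_eq0 subr_eq0 (negbTE x_neq1).
Qed.

Lemma sum_dvdn_mul (V : nmodType) (G : nat -> V) m A : (0 < A)%N ->
  \sum_(1 <= b < (m * A)%N.+1 | (A %| b)%N) G b = \sum_(1 <= c < m.+1) G (c * A)%N.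
Proof.
move=> A_gt0; elim: m => [|m IHm]; first by rewrite mul0n !big_geq.
rewrite (big_cat_nat _ (n := (m * A).+1)) //=; last by rewrite ltnS leq_pmul2r.
rewrite IHm [RHS]big_nat_recr //=; congr (_ + _).
rewrite big_mkcond big_nat_recr /=; last by rewrite ltn_pmul2r.
rewrite dvdn_mull // big1_seq ?add0r // => b /andP[_].
rewrite mem_index_iota => /andP[mA_lt_b b_lt].
case: ifP => // /dvdnP[q def_b]; move: mA_lt_b b_lt.
by rewrite def_b ltn_pmul2r // ltn_pmul2r // => /leq_trans/[apply]; rewrite ltnn.
Qed.

Lemma natr_divMr (F : numFieldType) (c A D : nat) : (0 < A)%N ->
  ((c * A)%N%:R / (D * A)%N%:R : F) = c%:R / D%:R.
Proof.
by move=> A_gt0; rewrite !natrM invfM mulrACA divff ?mulr1 // pnatr_eq0 -lt0n.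
Qed.

Section UnitCircle.
Variable R : realType.

Lemma ee_add (x y : R) : ee (x + y) = ee x * ee y.
Proof. by rewrite /ee !mulrDr cosD sinD /=; congr Complex; ring. Qed.

Lemma ee0 : ee (0 : R) = 1.
Proof. by rewrite /ee mulr0 cos0 sin0. Qed.

Lemma ee1 : ee (1 : R) = 1.
Proof. by rewrite /ee mulr1 mulr_natl cos2pi sin2pi. Qed.

Lemma ee_exp (x : R) k : ee x ^+ k = ee (k%:R * x).
Proof.
elim: k => [|k IHk]; first by rewrite expr0 mul0r ee0.
by rewrite exprS IHk -ee_add -addn1 natrD mulrDl mul1r addrC.
Qed.

Lemma ee_nat k : ee (k%:R : R) = 1.
Proof. by rewrite -[k%:R]mulr1 -ee_exp ee1 expr1n. Qed.

Lemma ee_int (z : int) : ee (z%:~R : R) = 1.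
Proof.
case: z => k; first exact: ee_nat.
have := ee_add (- k.+1%:R) k.+1%:R.
by rewrite addNr ee0 ee_nat mulr1 NegzE mulrNz.
Qed.

Lemma ee_neq1 (x : R) : 0 < x < 1 -> ee x != 1.
Proof.
wlog x_le_half : x / x <= 2^-1 => [wlog_x|].
  case/andP=> x_gt0 x_lt1; have [|x_gt_half] := lerP x 2^-1.
    by move=> ?; apply: wlog_x => //; rewrite x_gt0.
  have x'_le_half : 1 - x <= 2^-1 by lra.
  have x'_itv : 0 < 1 - x < 1 by apply/andP; split; lra.
  apply: contra_neq (wlog_x _ x'_le_half x'_itv) => eex1.
  by have := ee_add (1 - x) x; rewrite subrK ee1 eex1 mulr1.
case/andP=> x_gt0 _; apply/eqP => -[cos_eq1 _].
have pi_gt0 := pi_gt0 R.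
have y_itv : 2 * pi * x \in `[0, pi] by rewrite in_itv /=; apply/andP; split; nra.
have zero_itv : (0 : R) \in `[0, pi] by rewrite in_itv /= lexx ltW.
by have := cos_inj y_itv zero_itv; rewrite cos_eq1 cos0 => /(_ erefl); nra.
Qed.

Lemma sum_ee_exp (A c : nat) : (0 < A)%N ->
  \sum_(j < A) ee (c%:R / A%:R : R) ^+ j = if (A %| c)%N then A%:R else 0.
Proof.
move=> A_gt0; have A_neq0 : (A%:R : R) != 0 by rewrite pnatr_eq0 -lt0n.
case: ifP => [/dvdnP[q ->] | A_ndvd_c].
  rewrite natrM mulfK // ee_nat.
  by rewrite (eq_bigr _ (fun _ _ => expr1n _ _)) sumr_const card_ord.
apply: sum_expr_unity_root_eq0; first by rewrite ee_exp mulrC divfK // ee_nat.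
rewrite (divn_eq c A) natrD natrM mulrDl mulfK // ee_add ee_nat mul1r.
have c_mod_gt0 : (0 < c %% A)%N by rewrite lt0n -/(dvdn A c) A_ndvd_c.
apply: ee_neq1; rewrite divr_gt0 ?ltr0n //=.
by rewrite ltr_pdivrMr ?ltr0n // mul1r ltr_nat ltn_pmod.
Qed.

End UnitCircle.

Lemma big_parity_rec (V : comPzRingType) (Q : bool -> bool) (F : nat -> V) n :
  \prod_(1 <= i < n.+3 | Q (odd (n.+2 - i))) F i =
  (if Q true then F n.+1 else 1) * (if Q false then F n.+2 else 1) *
  \prod_(1 <= i < n.+1 | Q (odd (n - i))) F i.
Proof.
rewrite big_mkcond big_nat_recr // big_nat_recr // subnn subSnn.
rewrite -[LHS]mulrA [LHS]mulrC; congr (_ * _).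
rewrite [RHS]big_mkcond; apply: eq_big_nat => i /andP[_ i_le_n].
by rewrite !subSn ?(ltnW i_le_n) //= negbK.
Qed.

Section Polynomials.
Variable R : realType.
Variable a : nat -> nat.
Hypothesis a_gt0 : forall i, (0 < i)%N -> (0 < a i)%N.

Lemma dd0 : dd a 0 = 1%N.
Proof. by rewrite /dd big_geq. Qed.

Lemma ddS m : dd a m.+1 = (dd a m * a m.+1)%N.
Proof. by rewrite /dd big_nat_recr. Qed.

Lemma dd_gt0 m : (0 < dd a m)%N.
Proof. by elim: m => [|m IHm]; rewrite ?dd0 // ddS muln_gt0 IHm a_gt0. Qed.

Definition pp_factor i : {poly R[i]} := 1 - 'X^(dd a i.-1).

Definition pp_quot k : {poly R[i]} := \sum_(j < a k.+1) 'X^(dd a k) ^+ j.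

Lemma pnum_rec n : pnum R a n.+2 = pp_factor n.+2 * pnum R a n.
Proof. by rewrite /pnum (big_parity_rec _ negb pp_factor) /= mul1r. Qed.

Lemma pden_rec n : pden R a n.+2 = pp_factor n.+1 * pden R a n.
Proof. by rewrite /pden (big_parity_rec _ id pp_factor) /= mulr1. Qed.

Lemma pp_factorS k : pp_factor k.+2 = pp_factor k.+1 * pp_quot k.
Proof. by rewrite /pp_factor /= ddS exprM subr1X. Qed.

Lemma pp_factor_neq0 i : pp_factor i != 0.
Proof.
apply: contraTneq isT => /(congr1 (horner^~ 0)).
rewrite /pp_factor hornerD hornerN hornerXn hornerC expr0n horner0.
by rewrite gtn_eqF ?dd_gt0 // subr0 => /eqP; rewrite oner_eq0.
Qed.

Lemma pden_neq0 n : pden R a n != 0.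
Proof.
by rewrite prodf_seq_neq0; apply/allP => i _; apply/implyP => _; exact: pp_factor_neq0.
Qed.

Lemma pp_rec_of n :
  pnum R a n = pden R a n * pp R a n -> pp R a n.+2 = pp_quot n * pp R a n.
Proof.
move=> pnum_n; rewrite /pp -/(pp R a n) pnum_rec pden_rec pnum_n pp_factorS.
have -> : pp_factor n.+1 * pp_quot n * (pden R a n * pp R a n) =
          pp_quot n * pp R a n * (pp_factor n.+1 * pden R a n) by ring.
by rewrite mulpK // mulf_neq0 ?pp_factor_neq0 ?pden_neq0.
Qed.

Lemma pnumE n : pnum R a n = pden R a n * pp R a n.
Proof.
elim/ltn_ind: n => -[|[|n]] IHn.
- by rewrite /pnum /pden !big_geq // mul1r.
- by rewrite /pp (_ : pden R a 1 = 1) ?divp1 ?mul1r // /pden big_mkcond big_nat1.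
have pnum_n := IHn n (leqnSn n.+1).
by rewrite pp_rec_of // pnum_rec pden_rec pnum_n pp_factorS; ring.
Qed.

Lemma pp_rec n : pp R a n.+2 = pp_quot n * pp R a n.
Proof. exact/pp_rec_of/pnumE. Qed.

Lemma pp_quot_ee k c :
  (pp_quot k).[ee (c%:R / (dd a k.+1)%:R : R)] =
  if (a k.+1 %| c)%N then (a k.+1)%:R else 0.
Proof.
have dk_neq0 : ((dd a k)%:R : R) != 0 by rewrite pnatr_eq0 -lt0n dd_gt0.
rewrite horner_sum; under eq_bigr do rewrite horner_exp hornerXn ee_exp.
by rewrite ddS natrM invfM mulrCA mulVKf // sum_ee_exp ?a_gt0.
Qed.

End Polynomials.

Section FourierSums.
Variable R : realType.
Variable a : nat -> nat.
Hypothesis a_gt0 : forall i, (0 < i)%N -> (0 < a i)%N.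

Definition Xterm k (l : int) (x : R) : R[i] := (pp R a k).[ee x] * ee (x * l%:~R).

Definition Xsum k l : R[i] :=
  \sum_(1 <= m < (dd a k).+1) Xterm k l (m%:R / (dd a k)%:R).

Lemma XX_Xsum k l : XX R a k l = ((dd a k)%:R)^-1 * Xsum k l.
Proof.
case: k => [|k] //.
by rewrite /Xsum /Xterm dd0 big_nat1 hornerC !invr1 !mul1r ee_int.
Qed.

Lemma omega_lt n k : (0 < k < dd a n)%N -> omega R a n k = k%:R / (dd a n)%:R.
Proof.
case/andP=> k_gt0 k_lt_d; rewrite /omega (@floor_def _ _ 0) ?subr0 //.
rewrite add0r mulr0z mulr1z divr_ge0 ?ler0n //=.
by rewrite ltr_pdivrMr ?ltr0n ?(ltn_trans k_gt0) // mul1r ltr_nat.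
Qed.

Lemma Xsum_multiples k l :
  \sum_(1 <= b < (dd a k.+2).+1 | (a k.+2 %| b)%N)
     Xterm k.+2 l (b%:R / (dd a k.+2)%:R) = (a k.+1)%:R * Xsum k l.
Proof.
have [ak1_gt0 ak2_gt0] := (a_gt0 k.+1 isT, a_gt0 k.+2 isT).
rewrite [in LHS]ddS sum_dvdn_mul //.
transitivity (\sum_(1 <= c < (dd a k.+1).+1 | (a k.+1 %| c)%N)
                (a k.+1)%:R * Xterm k l (c%:R / (dd a k.+1)%:R)).
  rewrite [RHS]big_mkcond; apply: eq_bigr => c _.
  by rewrite natr_divMr // /Xterm pp_rec // hornerM pp_quot_ee // -mulrA; case: ifP; rewrite ?mul0r.
rewrite -big_distrr ddS sum_dvdn_mul //; congr (_ * _); apply: eq_bigr => m _.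
by rewrite natr_divMr.
Qed.

End FourierSums.

Theorem lemma4p5 (R : realType) (a : nat -> nat)
    (ha : forall i : nat, (1 <= i)%N -> (2 <= a i)%N)
    (n : nat) (hn : (2 <= n)%N) (l : int) :
  XX R a n l =
    ((dd a n)%:R)^-1 *
      \sum_(1 <= k < (dd a n).+1 | ~~ (a n %| k)%N)
        (pp R a n).[ee (omega R a n k)] * ee (omega R a n k * l%:~R)
    + ((a n)%:R)^-1 * XX R a (n - 2) l.
Proof.
have a_gt0 i : (0 < i)%N -> (0 < a i)%N by move/ha/ltnW.
case: n hn => [|[|k]] // _; rewrite !subSS subn0 !XX_Xsum //.
rewrite {1}/Xsum (bigID (fun b => a k.+2 %| b)%N) /= Xsum_multiples // addrC mulrDr.
congr (_ * _ + _).
  apply: congr_big_nat => // b /and3P[b_ndvd b_gt0 b_le_d].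
  rewrite /Xterm omega_lt // b_gt0 ltn_neqAle -ltnS b_le_d andbT.
  by apply: contraNneq b_ndvd => ->; rewrite ddS dvdn_mull.
have ak2_neq0 : ((a k.+2)%:R : R[i]) != 0 by rewrite pnatr_eq0 -lt0n a_gt0.
have ak1_neq0 : ((a k.+1)%:R : R[i]) != 0 by rewrite pnatr_eq0 -lt0n a_gt0.
have dk_neq0 : ((dd a k)%:R : R[i]) != 0 by rewrite pnatr_eq0 -lt0n dd_gt0.
rewrite !mulrA; congr (_ * _).
rewrite (ddS _ k.+1) (ddS _ k) !natrM; field.
by rewrite ak2_neq0 ak1_neq0 dk_neq0.
Qed.
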